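(* Let $x\in\mathbb{R}^n$, $\alpha>0$, $\kappa>0$ and $d_{\min}>0$. Let $\mathcal{D}=\{d_1,\ldots,d_p\}\subset\mathbb{R}^n$ be a positive spanning set of $\mathbb{R}^n$ with $\operatorname{cm}(\mathcal{D})\ge\kappa$ and $\|d_i\|\ge d_{\min}\alpha$ for all $i=1,\ldots,p$. Then $\mathcal{D}$ is a $\Lambda$-positive spanning set for $B(x,\alpha)$ with $\Lambda:=\frac{1}{d_{\min}\kappa}$.
   Context: $\|\cdot\|$ is the Euclidean norm and $B(y,r)=\{z\in\mathbb{R}^n:\|z-y\|\le r\}$. A set $\{d_1,\ldots,d_p\}\subset\mathbb{R}^n$ is a positive spanning set of $\mathbb{R}^n$ if every $v\in\mathbb{R}^n$ can be written $v=\sum_i c_id_i$ with all $c_i\ge 0$. The cosine measure of a finite set $\mathcal{D}$ is $\operatorname{cm}(\mathcal{D}):=\min_{v\neq 0}\max_{d\in\mathcal{D},\, d\neq 0}\frac{d^Tv}{\|d\|\,\|v\|}$. Given $x\in\mathbb{R}^n$, $\alpha>0$ and $\Lambda>0$, a set $\{d_1,\ldots,d_p\}$ is a $\Lambda$-positive spanning set for $B(x,\alpha)$ if for every $v\in B(0,\alpha)$ there exists $c(v)\in\mathbb{R}^p$ with $c(v)\ge0$ componentwise such that $v=\sum_{i=1}^p c_i(v)d_i$ and $\sum_{i=1}^p c_i(v)\le\Lambda$. *)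

From HB Require Import structures.
From mathcomp Require Import all_boot all_order all_algebra.
From mathcomp Require Import boolp classical_sets reals.
Set Implicit Arguments. Unset Strict Implicit. Unset Printing Implicit Defensive.
Import Order.TTheory GRing.Theory Num.Theory.
Local Open Scope ring_scope.
Local Open Scope classical_set_scope.

Section Defs.
Variable R : realType.
Variable n : nat.

Definition dotp (u v : 'rV[R]_n) : R := \sum_(k < n) u 0 k * v 0 k.
Definition enorm (v : 'rV[R]_n) : R := Num.sqrt (dotp v v).

Definition cball (y : 'rV[R]_n) (r : R) : 'rV[R]_n -> Prop :=
  fun z => enorm (z - y) <= r.

Definition pos_spanning (p : nat) (d : 'I_p -> 'rV[R]_n) : Prop :=
  forall v : 'rV[R]_n, exists c : 'I_p -> R,
    (forall i, 0 <= c i) /\ v = \sum_(i < p) c i *: d i.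

(* cosine measure: min over v <> 0 of max over nonzero d in D of the cosine;
   the min/max are attained, so they coincide with inf/sup. *)
Definition cos_max (p : nat) (d : 'I_p -> 'rV[R]_n) (v : 'rV[R]_n) : R :=
  sup [set t : R | exists i : 'I_p, d i != 0 /\
        t = dotp (d i) v / (enorm (d i) * enorm v)].

Definition cm (p : nat) (d : 'I_p -> 'rV[R]_n) : R :=
  inf [set t : R | exists v : 'rV[R]_n, v != 0 /\ t = cos_max d v].

Definition Lambda_pss (p : nat) (d : 'I_p -> 'rV[R]_n)
    (x : 'rV[R]_n) (alpha Lambda : R) : Prop :=
  forall v : 'rV[R]_n, cball 0 alpha v ->
    exists c : 'I_p -> R, (forall i, 0 <= c i) /\
      v = \sum_(i < p) c i *: d i /\ \sum_(i < p) c i <= Lambda.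
End Defs.

From HB Require Import structures.
From mathcomp Require Import all_boot all_order all_algebra.
From mathcomp Require Import boolp classical_sets reals topology normedtype derive.
From mathcomp Require Import ring lra.

Import Order.TTheory GRing.Theory Num.Theory.
Import numFieldNormedType.Exports.

Local Open Scope ring_scope.
Local Open Scope classical_set_scope.

Set Implicit Arguments. Unset Strict Implicit. Unset Printing Implicit Defensive.

(* Let C be the set of combinations sum_i c_i d_i with c >= 0 and sum_i c_i <= Λ;
   it is the image of a compact simplex, so every v has a nearest point u in C.
   If r := v - u were nonzero, optimality of u would give r.(w - u) <= 0 for every
   w in C, in particular for w = Λ d_i.  But cm(D) >= κ yields an i with
   κ ‖d_i‖ ‖r‖ <= d_i.r, hence Λ d_i.r >= α ‖r‖ >= v.r = u.r + ‖r‖^2 > u.r,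
   a contradiction.  So v = u lies in C. *)

Lemma ler0_of_small_perturbation (R : realFieldType) (t q : R) : 0 <= q ->
  (forall s, 0 < s <= 1 -> 2 * s * t <= s ^+ 2 * q) -> t <= 0.
Proof.
move=> q0 small; rewrite leNgt; apply/negP => t0.
have tq0 : 0 < t + q by lra.
pose s := t / (t + q).
have s0 : 0 < s by rewrite divr_gt0.
have s1 : s <= 1 by rewrite ler_pdivrMr // mul1r; lra.
have two_t : 2 * t <= s * q.
  have := small s; rewrite s0 s1 => /(_ isT).
  rewrite expr2 => h; nra.
have : s * q <= t by rewrite mulrAC ler_pdivrMr //; nra.
lra.
Qed.

Section InnerProduct.
Variables (R : realType) (n : nat).
Implicit Types u v w : 'rV[R]_n.

Lemma dotpC u v : dotp u v = dotp v u.
Proof. by apply: eq_bigr => k _; rewrite mulrC. Qed.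

Lemma dotpDl u w v : dotp (u + w) v = dotp u v + dotp w v.
Proof. by rewrite /dotp -big_split; apply: eq_bigr => k _; rewrite mxE mulrDl. Qed.

Lemma dotpZl a u v : dotp (a *: u) v = a * dotp u v.
Proof. by rewrite /dotp mulr_sumr; apply: eq_bigr => k _; rewrite mxE mulrA. Qed.

Lemma dotpBl u w v : dotp (u - w) v = dotp u v - dotp w v.
Proof. by rewrite dotpDl -scaleN1r dotpZl mulN1r. Qed.

Lemma dotpZr a u v : dotp v (a *: u) = a * dotp v u.
Proof. by rewrite dotpC dotpZl dotpC. Qed.

Lemma dotpBr u w v : dotp v (u - w) = dotp v u - dotp v w.
Proof. by rewrite dotpC dotpBl !(dotpC v). Qed.

Lemma dotp0l v : dotp 0 v = 0.
Proof. by rewrite -(scale0r 0) dotpZl mul0r. Qed.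

Lemma dotpBB u w : dotp (u - w) (u - w) = dotp u u - 2 * dotp u w + dotp w w.
Proof. by rewrite dotpBl !dotpBr (dotpC w u); ring. Qed.

Lemma dotp_ge0 u : 0 <= dotp u u.
Proof. by apply: sumr_ge0 => k _; rewrite -expr2 sqr_ge0. Qed.

Lemma dotp_eq0 u : (dotp u u == 0) = (u == 0).
Proof.
apply/eqP/eqP => [|->]; last exact: dotp0l.
have sq_ge0 k : 0 <= u 0 k * u 0 k by rewrite -expr2 sqr_ge0.
move=> /(psumr_eq0P (fun k _ => sq_ge0 k)) sq0.
apply/matrixP => i k; rewrite mxE ord1.
by apply/eqP; rewrite -[_ == 0]orbb -mulf_eq0 sq0.
Qed.

Lemma enorm_ge0 u : 0 <= enorm u.
Proof. exact: sqrtr_ge0. Qed.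

Lemma enorm_gt0 u : (0 < enorm u) = (u != 0).
Proof. by rewrite sqrtr_gt0 lt_def dotp_eq0 dotp_ge0 andbT. Qed.

Lemma sqr_enorm u : enorm u ^+ 2 = dotp u u.
Proof. by rewrite sqr_sqrtr // dotp_ge0. Qed.

Lemma dotp_le_enorm u v : dotp u v <= enorm u * enorm v.
Proof.
have [u0|] := eqVneq u 0; first by rewrite u0 dotp0l mulr_ge0 ?enorm_ge0.
rewrite -enorm_gt0 => a_gt0.
have [v0|] := eqVneq v 0; first by rewrite v0 dotpC dotp0l mulr_ge0 ?enorm_ge0.
rewrite -enorm_gt0 => b_gt0.
have := dotp_ge0 (enorm v *: u - enorm u *: v).
rewrite dotpBB !dotpZl !dotpZr -!sqr_enorm.
have ab_gt0 := mulr_gt0 a_gt0 b_gt0.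
nra.
Qed.

Lemma nearest_point_obtuse v u w :
  (forall s, 0 < s <= 1 ->
     dotp (v - u) (v - u) <= dotp (v - (u + s *: (w - u))) (v - (u + s *: (w - u)))) ->
  dotp (v - u) (w - u) <= 0.
Proof.
move=> nearest; apply: (ler0_of_small_perturbation (dotp_ge0 (w - u))) => s s01.
have := nearest s s01; rewrite opprD addrA (dotpBB (v - u)) !dotpZr dotpZl expr2; lra.
Qed.

Lemma dotp_continuous (T : topologicalType) (f g : T -> 'rV[R]_n) :
  continuous f -> continuous g -> continuous (fun t => dotp (f t) (g t)).
Proof.
move=> cf cg; apply: continuous_big; first exact: add_continuous.
move=> k _ t; have coord_k := @coord_continuous R 1 n 0 k.
by apply: continuousM; apply: continuous_comp (coord_k _); [exact: cf | exact: cg].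
Qed.

End InnerProduct.

Section CosineMeasure.
Variables (R : realType) (n p : nat) (d : 'I_p -> 'rV[R]_n).

(* [inf] of a set with no lower bound is 0, which [0 < cm d] rules out. *)
Lemma cm_le_cos_max v : 0 < cm d -> v != 0 -> cm d <= cos_max d v.
Proof.
rewrite /cm; set S := [set t | _] => cm_gt0 v0.
have [lbS|nolbS] := pselect (has_lbound S); first by apply: ge_inf => //; exists v.
by rewrite inf_out ?ltxx // in cm_gt0; case.
Qed.

(* A zero direction has cosine [0 / 0 = 0], so it may join the maximum. *)
Lemma cos_max_le_bigmax v :
  cos_max d v <= \big[Num.max/0]_(i < p) (dotp (d i) v / (enorm (d i) * enorm v)).
Proof.
rewrite /cos_max; set T := [set t | _].
have [supT|nosupT] := pselect (has_sup T); last by rewrite sup_out // bigmax_ge_id.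
by apply: ge_sup => [|_ [i [_ ->]]]; [case: supT | exact: le_bigmax].
Qed.

Lemma exists_cos_ge kappa v : 0 < kappa -> kappa <= cm d -> v != 0 ->
  exists i, kappa * (enorm (d i) * enorm v) <= dotp (d i) v.
Proof.
move=> kappa_gt0 kappa_le v0.
have := le_trans kappa_le (cm_le_cos_max (lt_le_trans kappa_gt0 kappa_le) v0).
move=> /le_trans /(_ (cos_max_le_bigmax v)) /bigmax_geP[|[i _ kappa_le_cos]].
  by rewrite leNgt kappa_gt0.
exists i; have di_gt0 : 0 < enorm (d i).
  by rewrite enorm_gt0; apply: contraTneq kappa_le_cos => ->; rewrite dotp0l mul0r -ltNge.
by rewrite -ler_pdivlMr // mulr_gt0 // enorm_gt0.
Qed.

Lemma exists_dir_dotp_ge (kappa dmin alpha : R) v r :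
  0 < kappa -> 0 < dmin -> kappa <= cm d ->
  (forall i, dmin * alpha <= enorm (d i)) -> enorm v <= alpha -> r != 0 ->
  exists i, dotp v r <= 1 / (dmin * kappa) * dotp (d i) r.
Proof.
move=> kappa_gt0 dmin_gt0 kappa_le dnorm v_le r0.
have [i cos_ge] := exists_cos_ge kappa_gt0 kappa_le r0; exists i.
have r_gt0 : 0 < enorm r by rewrite enorm_gt0.
have dk_gt0 : 0 < dmin * kappa by rewrite mulr_gt0.
have vr_le : dotp v r <= alpha * enorm r.
  exact: le_trans (dotp_le_enorm v r) (ler_wpM2r (ltW r_gt0) v_le).
have dr_ge : kappa * (dmin * alpha) * enorm r <= dotp (d i) r.
  apply: le_trans cos_ge; rewrite -mulrA.
  by apply: ler_wpM2l; [exact: ltW | apply: ler_wpM2r; [exact: ltW | exact: dnorm]].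
rewrite mul1r ler_pdivlMl //.
have := ler_wpM2l (ltW dk_gt0) vr_le.
lra.
Qed.

End CosineMeasure.

Section NearestCombination.
Variables (R : realType) (n p : nat) (d : 'I_p -> 'rV[R]_n).
Implicit Types (c : 'rV[R]_p) (L : R).

Definition lincomb c : 'rV[R]_n := \sum_(i < p) c 0 i *: d i.

Definition capped_simplex L : set 'rV[R]_p :=
  [set c | (forall i, 0 <= c 0 i) /\ \sum_(i < p) c 0 i <= L].

Lemma lincombD c c' : lincomb (c + c') = lincomb c + lincomb c'.
Proof. by rewrite /lincomb -big_split; apply: eq_bigr => i _; rewrite mxE scalerDl. Qed.

Lemma lincombZ a c : lincomb (a *: c) = a *: lincomb c.
Proof. by rewrite /lincomb scaler_sumr; apply: eq_bigr => i _; rewrite mxE scalerA. Qed.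

Lemma lincomb_delta i : lincomb (delta_mx 0 i) = d i.
Proof.
rewrite /lincomb (bigD1 i) //= mxE !eqxx scale1r big1 ?addr0 // => j ji.
by rewrite mxE (negbTE ji) andbF scale0r.
Qed.

Lemma continuous_lincomb : continuous lincomb.
Proof.
apply: continuous_big; first exact: add_continuous.
by move=> i _ c; apply: continuousZr_tmp; exact: coord_continuous.
Qed.

Lemma capped_simplex_convex L c c' s : capped_simplex L c -> capped_simplex L c' ->
  0 <= s <= 1 -> capped_simplex L ((1 - s) *: c + s *: c').
Proof.
move=> [c_ge0 c_le] [c'_ge0 c'_le] /andP[s_ge0 s_le1].
have coefE i : ((1 - s) *: c + s *: c') 0 i = (1 - s) * c 0 i + s * c' 0 i.
  by rewrite !mxE.
split=> [i|]; first by rewrite coefE addr_ge0 ?mulr_ge0 ?subr_ge0.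
under eq_bigr do rewrite coefE.
rewrite big_split /= -!mulr_sumr.
have : (1 - s) * \sum_(i < p) c 0 i <= (1 - s) * L by rewrite ler_wpM2l ?subr_ge0.
have : s * \sum_(i < p) c' 0 i <= s * L by rewrite ler_wpM2l.
lra.
Qed.

Lemma capped_simplex_vertex L i : 0 <= L -> capped_simplex L (L *: delta_mx 0 i).
Proof.
move=> L_ge0; have coefE j : (L *: delta_mx 0 i : 'rV[R]_p) 0 j = L * (j == i)%:R.
  by rewrite !mxE.
split=> [j|]; first by rewrite coefE mulr_ge0.
rewrite (bigD1 i) //= big1 => [|j ji]; first by rewrite coefE eqxx mulr1 addr0.
by rewrite coefE (negbTE ji) mulr0.
Qed.

Lemma compact_capped_simplex L : compact (capped_simplex L).
Proof.
apply: bounded_closed_compact.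
  exists L; split=> [|M LM c [c_ge0 c_le]]; first exact: num_real.
  rewrite /= -[`|c|]/(mx_norm c) mx_normrE; apply: bigmax_le => [|[k i] _ /=].
    by apply: ltW; apply: le_lt_trans LM; apply: le_trans c_le; exact: sumr_ge0.
  rewrite ord1 ger0_norm //; apply: ltW; apply: le_lt_trans LM; apply: le_trans c_le.
  by rewrite (bigD1 i) //= lerDl sumr_ge0.
have -> : capped_simplex L =
    \bigcap_(i in setT) ((fun c => c 0 i) @^-1` [set x | 0 <= x]) `&`
    ((fun c => \sum_(i < p) c 0 i) @^-1` [set x | x <= L]).
  by apply/seteqP; split=> c [c_ge0 c_le]; split=> // i; [move=> _ |]; exact: c_ge0.
apply: closedI; first apply: closed_bigI => i _.
  by apply: preimage_closed; [move=> c _; exact: coord_continuous | exact: closed_ge].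
apply: preimage_closed; last exact: closed_le.
move=> c _.
by apply: continuous_big; [exact: add_continuous | move=> i _; exact: coord_continuous].
Qed.

Lemma exists_nearest_lincomb L v : 0 <= L ->
  exists2 c, capped_simplex L c & forall c', capped_simplex L c' ->
    dotp (v - lincomb c) (v - lincomb c) <= dotp (v - lincomb c') (v - lincomb c').
Proof.
move=> L_ge0.
have dist_cont : continuous (fun c => dotp (v - lincomb c) (v - lincomb c)).
  have res_cont : continuous (fun c => v - lincomb c).
    by move=> c; apply: continuousB; [exact: cst_continuous | exact: continuous_lincomb].
  exact: dotp_continuous.
have [|c /set_mem c_in cmin] := EVT_min_rV _ (@compact_capped_simplex L)
  (continuous_subspaceT dist_cont).
  by exists 0; split=> [i|]; rewrite ?big1 // => *; rewrite mxE.
by exists c => // c' c'_in; apply: cmin; exact: mem_set.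
Qed.

Lemma nearest_lincomb_obtuse L v c c' : capped_simplex L c ->
  (forall c'', capped_simplex L c'' ->
    dotp (v - lincomb c) (v - lincomb c) <= dotp (v - lincomb c'') (v - lincomb c'')) ->
  capped_simplex L c' -> dotp (v - lincomb c) (lincomb c' - lincomb c) <= 0.
Proof.
move=> c_in cmin c'_in; apply: nearest_point_obtuse => s s01.
have -> : lincomb c + s *: (lincomb c' - lincomb c) = lincomb ((1 - s) *: c + s *: c').
  by rewrite lincombD !lincombZ scalerBr scalerBl scale1r addrA addrAC.
by apply: cmin; apply: capped_simplex_convex => //; case/andP: s01 => /ltW -> ->.
Qed.

End NearestCombination.

Theorem lemma3p3 (R : realType) (n p : nat) (x : 'rV[R]_n)
    (alpha kappa dmin : R) (d : 'I_p -> 'rV[R]_n) :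
  0 < alpha -> 0 < kappa -> 0 < dmin ->
  pos_spanning d ->
  kappa <= cm d ->
  (forall i : 'I_p, dmin * alpha <= enorm (d i)) ->
  Lambda_pss d x alpha (1 / (dmin * kappa)).
Proof.
move=> _ kappa_gt0 dmin_gt0 _ kappa_le dnorm v; rewrite /cball subr0 => v_le.
have L_ge0 : 0 <= 1 / (dmin * kappa) by rewrite divr_ge0 // ltW // mulr_gt0.
have [c c_in cmin] := exists_nearest_lincomb d v L_ge0.
have [c_ge0 c_le] := c_in; exists (fun i => c 0 i); split=> //; split=> //.
have [/eqP|r0] := eqVneq (v - lincomb d c) 0; first by rewrite subr_eq0 => /eqP.
exfalso; set r := v - lincomb d c in r0 cmin *.
have [i vr_le] := exists_dir_dotp_ge kappa_gt0 dmin_gt0 kappa_le dnorm v_le r0.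
have := nearest_lincomb_obtuse c_in cmin (capped_simplex_vertex i L_ge0).
have r_lincomb : dotp r (lincomb d c) = dotp r v - dotp r r.
  by rewrite -dotpBr /r opprB addrCA subrr addr0.
have rr_gt0 : 0 < dotp r r by rewrite -sqr_enorm exprn_gt0 // enorm_gt0.
rewrite lincombZ lincomb_delta dotpBr dotpZr r_lincomb !(dotpC r); lra.
Qed.
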